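(* For every $n\geq 12$ with $n\equiv 4,6,12$ or $14 \pmod{16}$, there exists an almost 2-perfect maximum 8-cycle packing of $K_n$.
   Context: An 8-cycle packing of $K_n$ on vertex set $\mathcal{X}$ is a triple $(\mathcal{X},\mathcal{C},\mathcal{L})$ with $\mathcal{C}$ a collection of pairwise edge-disjoint 8-cycles of $K_n$ and leave $\mathcal{L}$ the set of edges in no cycle of $\mathcal{C}$; it is maximum if $|\mathcal{L}|$ is minimum among all 8-cycle packings of $K_n$. For an 8-cycle $C$, an inside 8-cycle of $C$ is an 8-cycle on the same vertex set sharing no edge with $C$. The packing is almost 2-perfect if one can choose for each $C\in\mathcal{C}$ an inside 8-cycle $C'$ such that $(\mathcal{X},\{C'\},\mathcal{L})$ is again an 8-cycle packing with the same leave. *)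

From HB Require Import structures.
From mathcomp Require Import all_boot.
Set Implicit Arguments. Unset Strict Implicit. Unset Printing Implicit Defensive.

Definition Kn_edges (n : nat) : {set {set 'I_n}} := [set e : {set 'I_n} | #|e| == 2].

Definition cycle_edges (n : nat) (t : 8.-tuple 'I_n) : {set {set 'I_n}} :=
  [set [set tnth t i; tnth t (ordS i)] | i : 'I_8].

Definition is_8cycle (n : nat) (C : {set {set 'I_n}}) : Prop :=
  exists t : 8.-tuple 'I_n, uniq t /\ C = cycle_edges t.

Definition cycle_vertices (n : nat) (C : {set {set 'I_n}}) : {set 'I_n} := cover C.

Definition is_8cycle_packing (n : nat) (CC : {set {set {set 'I_n}}}) : Prop :=
  (forall C, C \in CC -> is_8cycle C) /\
  (forall C1 C2, C1 \in CC -> C2 \in CC -> C1 != C2 -> [disjoint C1 & C2]).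

Definition leave (n : nat) (CC : {set {set {set 'I_n}}}) : {set {set 'I_n}} :=
  Kn_edges n :\: cover CC.

Definition is_max_8cycle_packing (n : nat) (CC : {set {set {set 'I_n}}}) : Prop :=
  is_8cycle_packing CC /\
  (forall CC' : {set {set {set 'I_n}}}, is_8cycle_packing CC' ->
     #|leave CC| <= #|leave CC'|).

Definition inside_8cycle (n : nat) (C C' : {set {set 'I_n}}) : Prop :=
  is_8cycle C' /\ cycle_vertices C' = cycle_vertices C /\ [disjoint C & C'].

Definition almost_2_perfect (n : nat) (CC : {set {set {set 'I_n}}}) : Prop :=
  exists f : {set {set 'I_n}} -> {set {set 'I_n}},
    (forall C, C \in CC -> inside_8cycle C (f C)) /\
    {in CC &, injective f} /\
    is_8cycle_packing [set f C | C in CC] /\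
    leave [set f C | C in CC] = leave CC.

From mathcomp Require Import all_boot.
From mathcomp Require Import zify.
Set Implicit Arguments. Unset Strict Implicit. Unset Printing Implicit Defensive.

(* For even n every vertex of K_n has odd degree n - 1, while a packing of
   cycles covers an even number of edges at each vertex; hence every leave has
   at least n/2 edges.  Leaves of 8-cycle packings of K_n have sizes congruent
   mod 8, so a packing whose leave has n/2 + 4 edges is maximum.

   Such packings are built by induction n -> n + 8 from n = 12 and n = 14,
   together with an inside partner for every cycle: the edges joining the 8
   new vertices to all but e in {0, 2} old vertices split into copies of
   K_{4,4}, each the union of two 8-cycles that are inside cycles of each
   other, and a fixed small design covers the remaining new edges except a
   perfect matching on the new vertices.  Replacing every cycle by its partner
   keeps the leave.  The base cases and the small designs are checked by
   computation. *)

(* Explicit rather than [enum 'I_8], so that [vm_compute] can decide the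
   certificate checks below. *)
Definition ord8_enum : seq 'I_8 :=
  [:: @Ordinal 8 0 isT; @Ordinal 8 1 isT; @Ordinal 8 2 isT; @Ordinal 8 3 isT;
      @Ordinal 8 4 isT; @Ordinal 8 5 isT; @Ordinal 8 6 isT; @Ordinal 8 7 isT].
Arguments ord8_enum : simpl never.

Lemma mem_ord8_enum (i : 'I_8) : i \in ord8_enum.
Proof. by case: i => [[|[|[|[|[|[|[|[|//]]]]]]]] ?]. Qed.

Lemma all_ord8P (P : pred 'I_8) : reflect (forall i, P i) (all P ord8_enum).
Proof. by apply: (iffP allP) => [H i | H i _]; [apply: H; apply: mem_ord8_enum | apply: H]. Qed.

Lemma has_ord8P (P : pred 'I_8) : reflect (exists i, P i) (has P ord8_enum).
Proof.
by apply: (iffP hasP) => [[i _ Pi]|[i Pi]]; exists i => //; apply: mem_ord8_enum.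
Qed.

Lemma ordS_neq (i : 'I_8) : ordS i != i.
Proof. by move: i; apply/all_ord8P; vm_compute. Qed.

Lemma ordSS_neq (i : 'I_8) : ordS (ordS i) != i.
Proof. by move: i; apply/all_ord8P; vm_compute. Qed.

Section InsideDesigns.
Variable T : eqType.

Definition tedge (t : 8.-tuple T) (i : 'I_8) : T * T := (tnth t i, tnth t (ordS i)).

Definition same_edge (p q : T * T) :=
  ((p.1 == q.1) && (p.2 == q.2)) || ((p.1 == q.2) && (p.2 == q.1)).

Definition edge_disjoint (t1 t2 : 8.-tuple T) :=
  all (fun i => all (fun j => ~~ same_edge (tedge t1 i) (tedge t2 j)) ord8_enum) ord8_enum.

Definition covered_by (t : 8.-tuple T) (s : seq (8.-tuple T)) :=
  all (fun i => has (fun u => has (fun j => same_edge (tedge t i) (tedge u j)) ord8_enum) s)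
      ord8_enum.

Definition same_vertices (t t' : 8.-tuple T) :=
  all (fun x => x \in t') t && all (fun x => x \in t) t'.

Definition inside_pair (p : 8.-tuple T * 8.-tuple T) :=
  [&& uniq p.1, uniq p.2, edge_disjoint p.1 p.2 & same_vertices p.1 p.2].

(* Both families are packings with the same covered edges, so replacing
   every cycle by its partner keeps the leave. *)
Definition inside_design (L : seq (8.-tuple T * 8.-tuple T)) :=
  [&& all inside_pair L, pairwise edge_disjoint (map fst L),
      pairwise edge_disjoint (map snd L),
      all (covered_by^~ (map snd L)) (map fst L) &
      all (covered_by^~ (map fst L)) (map snd L)].

Lemma covered_by_catl t s1 s2 : covered_by t s1 -> covered_by t (s1 ++ s2).
Proof. by move=> /allP H; apply/allP => i /H; rewrite has_cat => ->. Qed.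

Lemma covered_by_catr t s1 s2 : covered_by t s2 -> covered_by t (s1 ++ s2).
Proof. by move=> /allP H; apply/allP => i /H; rewrite has_cat orbC => ->. Qed.

Lemma inside_design_cat L1 L2 : inside_design L1 -> inside_design L2 ->
  allrel edge_disjoint (map fst L1) (map fst L2) ->
  allrel edge_disjoint (map snd L1) (map snd L2) ->
  inside_design (L1 ++ L2).
Proof.
case/and5P=> in1 pw1 pw1' cov1 cov1'; case/and5P=> in2 pw2 pw2' cov2 cov2' dis dis'.
apply/and5P; split;
  rewrite ?map_cat ?all_cat ?pairwise_cat ?in1 ?in2 ?pw1 ?pw2 ?pw1' ?pw2' ?dis ?dis' //.
- by rewrite (sub_all _ cov1) ?(sub_all _ cov2) // => t;
    [apply: covered_by_catr | apply: covered_by_catl].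
- by rewrite (sub_all _ cov1') ?(sub_all _ cov2') // => t;
    [apply: covered_by_catr | apply: covered_by_catl].
Qed.

End InsideDesigns.

Section Transport.
Variables (T T' : eqType) (f : T -> T') (D : pred T).
Hypothesis f_inj : {in D &, injective f}.

Definition map_pair (p : 8.-tuple T * 8.-tuple T) := (map_tuple f p.1, map_tuple f p.2).
Definition pair_all (p : 8.-tuple T * 8.-tuple T) := all D p.1 && all D p.2.

Lemma tedge_map (t : 8.-tuple T) i : tedge (map_tuple f t) i = (f (tnth t i), f (tnth t (ordS i))).
Proof. by rewrite /tedge !tnth_map. Qed.

Lemma same_edge_map a b c d : D a -> D b -> D c -> D d ->
  same_edge (f a, f b) (f c, f d) = same_edge (a, b) (c, d).
Proof. by move=> Da Db Dc Dd; rewrite /same_edge /= !(inj_in_eq f_inj). Qed.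

Lemma edge_disjoint_map (t1 t2 : 8.-tuple T) : all D t1 -> all D t2 ->
  edge_disjoint (map_tuple f t1) (map_tuple f t2) = edge_disjoint t1 t2.
Proof.
move=> /all_tnthP D1 /all_tnthP D2; apply: eq_all => i; apply: eq_all => j.
by rewrite !tedge_map same_edge_map.
Qed.

Lemma covered_by_map (t : 8.-tuple T) (s : seq (8.-tuple T)) :
  all D t -> all (fun u : 8.-tuple T => all D u) s ->
  covered_by (map_tuple f t) (map (map_tuple f) s) = covered_by t s.
Proof.
move=> /all_tnthP Dt /allP Ds; apply: eq_all => i; rewrite has_map.
apply: eq_in_has => u /Ds /all_tnthP Du; apply: eq_has => j.
by rewrite !tedge_map same_edge_map.
Qed.

Lemma mem_map_in x s : D x -> all D s -> (f x \in map f s) = (x \in s).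
Proof.
move=> Dx /allP Ds; apply/mapP/idP => [[y ys fxy]|xs]; last by exists x.
by rewrite (f_inj Dx (Ds y ys) fxy).
Qed.

Lemma same_vertices_map (t t' : 8.-tuple T) : all D t -> all D t' ->
  same_vertices (map_tuple f t) (map_tuple f t') = same_vertices t t'.
Proof.
move=> Dt Dt'; rewrite /same_vertices /= !all_map.
congr andb; apply: eq_in_all => x xt.
- exact: mem_map_in (allP Dt x xt) Dt'.
- exact: mem_map_in (allP Dt' x xt) Dt.
Qed.

Lemma uniq_map_tuple (t : 8.-tuple T) : all D t -> uniq (map_tuple f t) = uniq t.
Proof. by move=> /allP Dt; rewrite map_inj_in_uniq // => x y /Dt Dx /Dt Dy; apply: f_inj. Qed.

Lemma inside_design_map L : all pair_all L -> inside_design L -> inside_design (map map_pair L).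
Proof.
move=> /allP DL /and5P[inL pw1 pw2 cov1 cov2].
have map_fst : map fst (map map_pair L) = map (map_tuple f) (map fst L) by rewrite -!map_comp.
have map_snd : map snd (map map_pair L) = map (map_tuple f) (map snd L) by rewrite -!map_comp.
have D1 : all (fun u : 8.-tuple T => all D u) (map fst L).
  by apply/allP => _ /mapP[p /DL /andP[]] ? _ ->.
have D2 : all (fun u : 8.-tuple T => all D u) (map snd L).
  by apply/allP => _ /mapP[p /DL /andP[]] _ ? ->.
have pw_map s : all (fun u : 8.-tuple T => all D u) s -> pairwise (@edge_disjoint _) s ->
    pairwise (@edge_disjoint _) (map (map_tuple f) s).
  rewrite pairwise_map; apply: (sub_in_pairwise (P := fun u : 8.-tuple T => all D u)).
  by move=> x y Dx Dy /=; rewrite edge_disjoint_map.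
apply/and5P; split; rewrite ?map_fst ?map_snd ?pw_map // all_map.
- apply/allP => p pL; have /andP[D1p D2p] := DL p pL.
  have := allP inL p pL; rewrite /inside_pair /=.
  by rewrite !uniq_map_tuple // edge_disjoint_map // same_vertices_map.
- by apply/allP => t tL /=; rewrite covered_by_map ?(allP D1) ?(allP cov1).
- by apply/allP => t tL /=; rewrite covered_by_map ?(allP D2) ?(allP cov2).
Qed.

End Transport.

Lemma eq_set2_same_edge (T : finType) (a b c d : T) :
  ([set a; b] == [set c; d]) = same_edge (a, b) (c, d).
Proof.
rewrite /same_edge /=; apply/eqP/idP => [E|]; last first.
  by case/orP=> /andP[/eqP-> /eqP->] //; rewrite setUC.
have ha : a \in [set c; d] by rewrite -E set21.
have hb : b \in [set c; d] by rewrite -E set22.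
have hc : c \in [set a; b] by rewrite E set21.
have hd : d \in [set a; b] by rewrite E set22.
move: ha hb hc hd; rewrite !in_set2.
by do 4 (case/orP=> /eqP ?); subst; rewrite ?eqxx ?orbT.
Qed.

Section CycleEdges.
Variable n : nat.
Implicit Types (t : 8.-tuple 'I_n).

Lemma cycle_edgesP t e :
  reflect (exists i, e = [set tnth t i; tnth t (ordS i)]) (e \in cycle_edges t).
Proof. by apply: (iffP imsetP) => [[i _ ->]|[i ->]]; exists i. Qed.

Lemma disjoint_cycle_edges t1 t2 :
  edge_disjoint t1 t2 -> [disjoint cycle_edges t1 & cycle_edges t2].
Proof.
move=> /all_ord8P dis; rewrite -setI_eq0; apply/eqP/setP => e; rewrite !inE.
apply/negP => /andP[/cycle_edgesP[i ->] /cycle_edgesP[j /eqP]].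
by rewrite eq_set2_same_edge; apply/negP; apply: (all_ord8P _ (dis i) j).
Qed.

Lemma covered_by_cycle_edges t (s : seq (8.-tuple 'I_n)) e :
  covered_by t s -> e \in cycle_edges t -> exists2 u, u \in s & e \in cycle_edges u.
Proof.
move=> /all_ord8P cov /cycle_edgesP[i ->]; case/hasP: (cov i) => u us /has_ord8P[j ij].
by exists u => //; apply/cycle_edgesP; exists j; apply/eqP; rewrite eq_set2_same_edge.
Qed.

Lemma cycle_vertices_edges t : cycle_vertices (cycle_edges t) = [set x | x \in t].
Proof.
apply/setP=> x; rewrite inE; apply/bigcupP/idP => [[e /cycle_edgesP[i ->]]|].
  by rewrite in_set2 => /orP[] /eqP ->; apply: mem_tnth.
case/tnthP=> i ->; exists [set tnth t i; tnth t (ordS i)]; last exact: set21.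
by apply/cycle_edgesP; exists i.
Qed.

Lemma cycle_edge_inj t : uniq t -> injective (fun i => [set tnth t i; tnth t (ordS i)]).
Proof.
move=> /tuple_uniqP t_inj i j /eqP; rewrite eq_set2_same_edge /same_edge /=.
case/orP=> /andP[/eqP/t_inj ij /eqP/t_inj SiSj] //.
by move: (ordSS_neq j); rewrite -ij SiSj eqxx.
Qed.

Lemma card_cycle_edges t : uniq t -> #|cycle_edges t| = 8.
Proof. by move=> t_uniq; rewrite card_imset ?card_ord //; apply: cycle_edge_inj. Qed.

Lemma cycle_edges_sub t : uniq t -> cycle_edges t \subset Kn_edges n.
Proof.
move=> /tuple_uniqP t_inj; apply/subsetP=> e /cycle_edgesP[i ->]; rewrite inE cards2.
suff -> : tnth t i != tnth t (ordS i) by [].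
by apply/eqP => /t_inj/eqP; rewrite eq_sym (negbTE (ordS_neq i)).
Qed.

Lemma cycle_edges_neq0 t : cycle_edges t != set0.
Proof.
by apply/set0Pn; exists [set tnth t ord0; tnth t (ordS ord0)]; apply/cycle_edgesP; exists ord0.
Qed.

Lemma card_cycle_edges_at t v : uniq t ->
  #|[set e in cycle_edges t | v \in e]| = 2 * (v \in t).
Proof.
move=> t_uniq; have t_inj := tuple_uniqP _ t_uniq.
case: (boolP (v \in t)) => [/tnthP[i ->]|vt]; last first.
  apply/eqP; rewrite cards_eq0; apply/eqP/setP=> e; rewrite !inE.
  apply/negP => /andP[/cycle_edgesP[i ->]].
  by rewrite in_set2 => /orP[]/eqP E; move: vt; rewrite E mem_tnth.
pose edge j := [set tnth t j; tnth t (ordS j)].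
have -> : [set e in cycle_edges t | tnth t i \in e] = [set edge (ord_pred i); edge i].
  apply/setP=> e; rewrite !inE; apply/andP/orP => [[/cycle_edgesP[j ->]]|].
    by rewrite in_set2 => /orP[]/eqP/t_inj ->; [right | left; rewrite ordSK].
  case=> /eqP->; split; try by apply/cycle_edgesP; eexists.
    by rewrite /edge ord_predK set22.
  exact: set21.
rewrite cards2; suff -> : edge (ord_pred i) != edge i by [].
apply/eqP => /(cycle_edge_inj t_uniq) E.
by move: (ordS_neq (ord_pred i)); rewrite {2}E ord_predK eqxx.
Qed.

End CycleEdges.

Lemma pairwise_sym_mem (X : eqType) (r : rel X) (s : seq X) x y :
  symmetric r -> pairwise r s -> x \in s -> y \in s -> x != y -> r x y.
Proof.
move=> r_sym; elim: s => [|z s IH] //= /andP[/allP rz rs].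
rewrite !inE => /orP[/eqP->|xs] /orP[/eqP->|ys]; rewrite ?eqxx // => xy.
- exact: rz.
- by rewrite r_sym; apply: rz.
- exact: IH.
Qed.

Lemma uniq_pairwise_disjoint (T : finType) (s : seq {set T}) :
  pairwise (fun A B : {set T} => [disjoint A & B]) s -> all (fun A => A != set0) s -> uniq s.
Proof.
elim: s => [|A s IH] //= /andP[/allP dA ds] /andP[A0 s0]; rewrite IH // andbT.
by apply/negP => /dA; rewrite -setI_eq0 setIid; apply/negP.
Qed.

Section DesignPacking.
Variables (n : nat) (L : seq (8.-tuple 'I_n * 8.-tuple 'I_n)).
Hypothesis L_design : inside_design L.

Let cycles := map (fun p => cycle_edges p.1) L.
Let partners := map (fun p => cycle_edges p.2) L.

Definition design_packing : {set {set {set 'I_n}}} := [set C | C \in cycles].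
Definition design_partner (C : {set {set 'I_n}}) := nth set0 partners (index C cycles).

Lemma design_inside_pair p : p \in L -> inside_pair p.
Proof. by case/and5P: L_design => /allP inL _ _ _ _ /inL. Qed.

Lemma pairwise_disjoint_cycles :
  pairwise (fun A B : {set {set 'I_n}} => [disjoint A & B]) cycles.
Proof.
case/and5P: L_design => _ pw _ _ _; move: pw; rewrite /cycles !pairwise_map.
by apply: sub_pairwise => p q /disjoint_cycle_edges.
Qed.

Lemma pairwise_disjoint_partners :
  pairwise (fun A B : {set {set 'I_n}} => [disjoint A & B]) partners.
Proof.
case/and5P: L_design => _ _ pw _ _; move: pw; rewrite /partners !pairwise_map.
by apply: sub_pairwise => p q /disjoint_cycle_edges.
Qed.

Lemma uniq_cycles : uniq cycles.
Proof.
apply: uniq_pairwise_disjoint pairwise_disjoint_cycles _.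
by apply/allP => _ /mapP[p _ ->]; apply: cycle_edges_neq0.
Qed.

Lemma uniq_partners : uniq partners.
Proof.
apply: uniq_pairwise_disjoint pairwise_disjoint_partners _.
by apply/allP => _ /mapP[p _ ->]; apply: cycle_edges_neq0.
Qed.

Lemma design_partnerE p : p \in L -> design_partner (cycle_edges p.1) = cycle_edges p.2.
Proof.
move=> pL; have iL : index p L < size L by rewrite index_mem.
have <- : nth set0 cycles (index p L) = cycle_edges p.1 by rewrite (nth_map p) // nth_index.
by rewrite /design_partner index_uniq ?size_map ?uniq_cycles // (nth_map p) // nth_index.
Qed.

Lemma design_packing_partners :
  [set design_partner C | C in design_packing] = [set D | D \in partners].
Proof.
apply/setP=> D; rewrite inE; apply/imsetP/idP => [[C]|/mapP[p pL ->]].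
  by rewrite inE => /mapP[p pL ->] ->; rewrite design_partnerE //; apply: map_f.
exists (cycle_edges p.1); last by rewrite design_partnerE.
by rewrite inE; apply: (map_f (fun p => cycle_edges p.1)).
Qed.

Lemma cover_partners : cover [set D | D \in partners] = cover design_packing.
Proof.
case/and5P: L_design => _ _ _ /allP cov1 /allP cov2.
apply/setP=> e; apply/bigcupP/bigcupP => [[C]|[C]]; rewrite inE => /mapP[p pL ->] ep.
- have [_ /mapP[q qL ->] e_in] := covered_by_cycle_edges (cov2 _ (map_f _ pL)) ep.
  by exists (cycle_edges q.1); rewrite // inE; apply: map_f.
- have [_ /mapP[q qL ->] e_in] := covered_by_cycle_edges (cov1 _ (map_f _ pL)) ep.
  by exists (cycle_edges q.2); rewrite // inE; apply: map_f.
Qed.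

Lemma design_packing_is_packing : is_8cycle_packing design_packing.
Proof.
split=> [C|C1 C2]; rewrite ?inE.
  by case/mapP=> p /design_inside_pair /and4P[p1_uniq _ _ _] ->; exists p.1.
move=> C1in C2in; apply: pairwise_sym_mem pairwise_disjoint_cycles C1in C2in.
exact: disjoint_sym.
Qed.

Lemma inside_8cycle_pair p : p \in L -> inside_8cycle (cycle_edges p.1) (cycle_edges p.2).
Proof.
move=> /design_inside_pair /and4P[_ p2_uniq p_disj /andP[/allP sub12 /allP sub21]].
split; first by exists p.2.
split; last exact: disjoint_cycle_edges.
by rewrite !cycle_vertices_edges; apply/setP => x; rewrite !inE; apply/idP/idP => [/sub21|/sub12].
Qed.

Lemma design_partner_inj : {in design_packing &, injective design_partner}.
Proof.
move=> C1 C2; rewrite !inE => /mapP[p pL ->] /mapP[q qL ->]; rewrite !design_partnerE // => pq.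
have [pi qi] : index p L < size L /\ index q L < size L by rewrite !index_mem.
have /eqP : nth set0 partners (index p L) = nth set0 partners (index q L)
  by rewrite /partners !(nth_map p) // !nth_index.
rewrite nth_uniq ?size_map ?uniq_partners // => /eqP ipq.
by rewrite -(nth_index p pL) ipq nth_index.
Qed.

Lemma design_packing_almost_2_perfect : almost_2_perfect design_packing.
Proof.
exists design_partner; split; [|split; [exact: design_partner_inj|split]].
- by move=> C; rewrite inE => /mapP[p pL ->]; rewrite design_partnerE //; apply: inside_8cycle_pair.
- rewrite design_packing_partners; split=> [D|D1 D2]; rewrite ?inE.
    by case/mapP=> p /design_inside_pair /and4P[_ p2_uniq _ _] ->; exists p.2.
  move=> D1in D2in; apply: pairwise_sym_mem pairwise_disjoint_partners D1in D2in.
  exact: disjoint_sym.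
- by rewrite /leave design_packing_partners cover_partners.
Qed.

Lemma card_design_packing : #|design_packing| = size L.
Proof. by rewrite cardsE (card_uniqP uniq_cycles) size_map. Qed.

End DesignPacking.

Section LeaveBound.
Variable n : nat.
Implicit Types (E : {set {set 'I_n}}) (CC : {set {set {set 'I_n}}}).

Definition edges_at E (v : 'I_n) := [set e in E | v \in e].

Lemma card_edges_at E v : #|edges_at E v| = \sum_(e in E) (v \in e).
Proof.
rewrite -sum1_card big_mkcond [RHS]big_mkcond; apply: eq_bigr => e _.
by rewrite !inE; case: (e \in E); case: (v \in e).
Qed.

Lemma sum_card_edges_at E : E \subset Kn_edges n -> \sum_v #|edges_at E v| = 2 * #|E|.
Proof.
move=> /subsetP EK; under eq_bigr => v _ do rewrite card_edges_at.
rewrite exchange_big /= -sum1_card big_distrr /=; apply: eq_bigr => e /EK; rewrite inE => /eqP <-.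
by rewrite muln1 -sum1_card [RHS]big_mkcond; apply: eq_bigr => v _; case: (v \in e).
Qed.

Lemma card_edges_at_Kn v : #|edges_at (Kn_edges n) v| = n.-1.
Proof.
have -> : edges_at (Kn_edges n) v = [set [set v; w] | w in [set~ v]].
  apply/setP=> e; rewrite !inE; apply/andP/imsetP => [[/cards2P[x [y [xy ->]]]]|[w]].
    case/set2P=> ->; first by exists y; rewrite // !inE eq_sym.
    by exists x; rewrite 1?setUC // !inE.
  rewrite !inE => wv ->; split; last exact: set21.
  by move: wv; rewrite cards2 eq_sym => ->.
rewrite card_imset ?cardsC1 ?card_ord // => w w' /eqP; rewrite eq_set2_same_edge /same_edge /=.
by rewrite eqxx /= => /orP[/eqP //|/andP[/eqP <- /eqP ->]].
Qed.

Lemma cover_packing_sub CC : is_8cycle_packing CC -> cover CC \subset Kn_edges n.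
Proof.
case=> CC_cycles _; apply/bigcupsP => C /CC_cycles[t [t_uniq ->]].
exact: cycle_edges_sub.
Qed.

Lemma packing_trivIset CC : is_8cycle_packing CC -> trivIset CC.
Proof. by case=> _ CC_disj; apply/trivIsetP. Qed.

Lemma card_cover_packing CC : is_8cycle_packing CC -> #|cover CC| = 8 * #|CC|.
Proof.
move=> CC_pack; have [CC_cycles _] := CC_pack.
have /eqP -> : #|cover CC| == \sum_(C in CC) #|C|.
  by rewrite (leq_card_cover CC).2 packing_trivIset.
rewrite mulnC -sum_nat_const.
by apply: eq_bigr => C /CC_cycles[t [t_uniq ->]]; apply: card_cycle_edges.
Qed.

Lemma card_leave_packing CC : is_8cycle_packing CC -> #|leave CC| + 8 * #|CC| = 'C(n, 2).
Proof.
move=> CC_pack; have CC_sub := cover_packing_sub CC_pack.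
have := subset_leq_card CC_sub.
rewrite /leave cardsDS // -card_cover_packing // /Kn_edges card_draws card_ord; lia.
Qed.

(* Each cycle through v contributes exactly two edges at v. *)
Lemma dvd2_card_edges_at_cover CC v : is_8cycle_packing CC -> 2 %| #|edges_at (cover CC) v|.
Proof.
move=> CC_pack; have [CC_cycles _] := CC_pack.
rewrite card_edges_at (big_trivIset _ (packing_trivIset CC_pack)) /=.
apply: dvdn_sum => C /CC_cycles[t [t_uniq ->]].
by rewrite -card_edges_at card_cycle_edges_at // dvdn_mulr.
Qed.

Lemma leave_lower_bound CC : is_8cycle_packing CC -> ~~ odd n -> n <= 2 * #|leave CC|.
Proof.
move=> CC_pack n_even; have CC_sub := cover_packing_sub CC_pack.
rewrite -sum_card_edges_at ?subsetDl // -[n in n <= _]card_ord -sum1_card.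
apply: leq_sum => v _.
have -> : edges_at (leave CC) v = edges_at (Kn_edges n) v :\: edges_at (cover CC) v.
  apply/setP => e; rewrite /edges_at !inE.
  by case: (e \in cover CC); case: (v \in e); rewrite /= ?andbT ?andbF.
have sub_at : edges_at (cover CC) v \subset edges_at (Kn_edges n) v.
  by apply/subsetP => e; rewrite /edges_at !inE => /andP[/(subsetP CC_sub)]; rewrite inE => -> ->.
have := subset_leq_card sub_at; have := dvd2_card_edges_at_cover v CC_pack.
have := ltn_ord v; move: n_even; rewrite -dvdn2 cardsDS // card_edges_at_Kn; lia.
Qed.

(* Leaves of two packings differ in size by a multiple of 8. *)
Lemma max_packing_of_small_leave CC :
  is_8cycle_packing CC -> ~~ odd n -> 2 * #|leave CC| < n + 16 -> is_max_8cycle_packing CC.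
Proof.
move=> CC_pack n_even small; split=> // CC' CC'_pack.
have := card_leave_packing CC_pack; have := card_leave_packing CC'_pack.
have := leave_lower_bound CC'_pack n_even; lia.
Qed.

End LeaveBound.

(* Edge-disjointness of whole designs is certified by locating their edges,
   as pairs (min, max) of vertex keys, in disjoint regions of nat * nat. *)
Section Regions.
Variables (T : eqType) (key : T -> nat).

Definition edge_in (R : rel nat) (p : T * T) :=
  R (minn (key p.1) (key p.2)) (maxn (key p.1) (key p.2)).

Definition edges_in (R : rel nat) (t : 8.-tuple T) :=
  all (fun i => edge_in R (tedge t i)) ord8_enum.

Definition design_in (R : rel nat) (L : seq (8.-tuple T * 8.-tuple T)) :=
  all (edges_in R) (map fst L ++ map snd L).

Definition regions_disjoint (R1 R2 : rel nat) := forall lo hi, R1 lo hi -> R2 lo hi -> False.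

Lemma same_edge_in R p q : same_edge p q -> edge_in R p = edge_in R q.
Proof.
by case: p q => [a b] [c d] /orP[] /andP[/eqP/= -> /eqP/= ->]; rewrite /edge_in //= minnC maxnC.
Qed.

Lemma edge_disjoint_in R1 R2 t1 t2 :
  regions_disjoint R1 R2 -> edges_in R1 t1 -> edges_in R2 t2 -> edge_disjoint t1 t2.
Proof.
move=> R12 /all_ord8P in1 /all_ord8P in2; apply/all_ord8P => i; apply/all_ord8P => j.
by apply/negP => /(same_edge_in R2); move: (in1 i) (in2 j) => + + eq12; rewrite -eq12; apply: R12.
Qed.

Lemma design_in_cat R L1 L2 : design_in R (L1 ++ L2) = design_in R L1 && design_in R L2.
Proof. by rewrite /design_in !map_cat !all_cat; case: all; case: all; case: all. Qed.

Lemma sub_design_in (R1 R2 : rel nat) L : subrel R1 R2 -> design_in R1 L -> design_in R2 L.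
Proof.
move=> R12; apply: sub_all => t /all_ord8P t_in; apply/all_ord8P => i.
exact: R12 (t_in i).
Qed.

Lemma inside_design_cat_in R1 R2 L1 L2 : regions_disjoint R1 R2 ->
  inside_design L1 -> design_in R1 L1 -> inside_design L2 -> design_in R2 L2 ->
  inside_design (L1 ++ L2).
Proof.
move=> R12 L1_design /allP L1_in L2_design /allP L2_in.
have dis (s1 s2 : seq (8.-tuple T)) : {subset s1 <= map fst L1 ++ map snd L1} ->
    {subset s2 <= map fst L2 ++ map snd L2} -> allrel (@edge_disjoint T) s1 s2.
  move=> s1_sub s2_sub; apply/allrelP => t1 t2 /s1_sub/L1_in t1_in /s2_sub/L2_in t2_in.
  exact: edge_disjoint_in R12 t1_in t2_in.
by apply: inside_design_cat => //; apply: dis => t ts; rewrite mem_cat ts ?orbT.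
Qed.

Lemma inside_design_flatten_in (X : eqType) (F : X -> seq (8.-tuple T * 8.-tuple T))
    (R : X -> rel nat) (s : seq X) : uniq s ->
  (forall x, x \in s -> inside_design (F x) /\ design_in (R x) (F x)) ->
  {in s &, forall x y, x != y -> regions_disjoint (R x) (R y)} ->
  inside_design (flatten (map F s)) /\
  design_in (fun lo hi => has (fun x => R x lo hi) s) (flatten (map F s)).
Proof.
elim: s => [|x s IH] //= /andP[xs s_uniq] Fs_design Rs_disj.
have [Fx_design Fx_in] := Fs_design x (mem_head x s).
have [s_design s_in] : inside_design (flatten (map F s)) /\
    design_in (fun lo hi => has (fun y => R y lo hi) s) (flatten (map F s)).
  by apply: IH => // [y ys|y z ys zs]; [apply: Fs_design | apply: Rs_disj];
    rewrite inE ?ys ?zs orbT.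
split.
  apply: inside_design_cat_in Fx_design Fx_in s_design s_in => lo hi Rx /hasP[y ys Ry].
  by apply: Rs_disj Rx Ry; rewrite ?inE ?eqxx ?ys ?orbT //; apply: contraNneq xs => ->.
rewrite design_in_cat; apply/andP; split.
  by apply: sub_design_in Fx_in => lo hi /= ->.
by apply: sub_design_in s_in => lo hi /= ->; rewrite orbT.
Qed.

End Regions.

Lemma design_in_map (T T' : eqType) (key : T -> nat) (key' : T' -> nat) (f : T -> T')
    (R R' : rel nat) L :
  (forall x y, edge_in key R (x, y) -> edge_in key' R' (f x, f y)) ->
  design_in key R L -> design_in key' R' (map (map_pair f) L).
Proof.
move=> fR; rewrite /design_in -!map_comp.
have -> : [seq (map_pair f p).1 | p <- L] ++ [seq (map_pair f p).2 | p <- L] =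
    map (map_tuple f) (map fst L ++ map snd L) by rewrite map_cat -!map_comp.
rewrite all_map; apply: sub_all => t /all_ord8P t_in; apply/all_ord8P => i.
by rewrite tedge_map; apply: fR (t_in i).
Qed.

Lemma design_in_bound (R : rel nat) (b : nat) L : (forall lo hi, R lo hi -> hi < b) ->
  design_in id R L -> all (pair_all (fun x => x < b)) L.
Proof.
move=> Rb /allP L_in; apply/allP => p pL.
have bounded t : t \in map fst L ++ map snd L -> all (fun x => x < b) t.
  move=> /L_in /all_ord8P t_in; apply/all_tnthP => i.
  by apply: leq_ltn_trans (Rb _ _ (t_in i)); rewrite leq_max leqnn.
by rewrite /pair_all !bounded // mem_cat map_f ?orbT.
Qed.

Lemma inord_inj_in (m : nat) (g : nat -> nat) (D : pred nat) :
  {in D, forall x, g x < m.+1} -> {in D &, injective g} ->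
  {in D &, injective (fun x => inord (g x) : 'I_m.+1)}.
Proof.
move=> g_lt g_inj x y Dx Dy /(congr1 (@nat_of_ord _)).
by rewrite !inordK ?g_lt //; apply: g_inj.
Qed.

(* The leave of such a design has n/2 + 4 edges. *)
Definition extremal_design (n : nat) :=
  exists L : seq (8.-tuple 'I_n * 8.-tuple 'I_n),
    inside_design L /\ 16 * size L + n + 8 = n * (n - 1).

Lemma extremal_design_of_nat (m : nat) (L : seq (8.-tuple nat * 8.-tuple nat)) :
  inside_design L -> design_in id (fun _ hi => hi < m.+1) L ->
  16 * size L + m.+1 + 8 = m.+1 * m -> extremal_design m.+1.
Proof.
move=> L_design L_in L_size; exists (map (map_pair (fun x => inord x : 'I_m.+1)) L).
split; last by rewrite size_map subn1.
apply: (inside_design_map (D := fun x => x < m.+1)) L_design.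
- exact: (inord_inj_in (g := id)).
- exact: design_in_bound L_in.
Qed.

(* K_{4,4} with parts {0..3}, {4..7} is the union of two 8-cycles, each an
   inside cycle of the other. *)
Definition k44_design : seq (8.-tuple nat * 8.-tuple nat) :=
  [:: ([tuple 0;4;1;5;2;6;3;7], [tuple 0;5;3;4;2;7;1;6]);
      ([tuple 0;5;3;4;2;7;1;6], [tuple 0;4;1;5;2;6;3;7])].

Definition k44_shape (lo hi : nat) := (lo < 4 <= hi) && (hi < 8).

Lemma k44_design_ok : inside_design k44_design /\ design_in id k44_shape k44_design.
Proof. by split; vm_compute. Qed.

(* Designs on the new vertices 0..7 and the old vertices 8..7+e, covering
   every edge with an endpoint below 8 except {0,1}, {2,3}, {4,5}, {6,7}. *)
Definition core_design (e : nat) : seq (8.-tuple nat * 8.-tuple nat) :=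
  if e == 0 then
  [:: ([tuple 0;7;5;1;3;6;4;2], [tuple 0;4;1;2;7;3;5;6]);
      ([tuple 1;2;6;0;5;3;4;7], [tuple 0;7;5;2;4;6;1;3]);
      ([tuple 0;4;1;6;5;2;7;3], [tuple 0;5;1;7;4;3;6;2])]
  else
  [:: ([tuple 3;4;0;7;9;6;8;5], [tuple 0;3;6;5;7;8;4;9]);
      ([tuple 4;9;1;8;0;3;6;2], [tuple 0;6;9;3;8;2;1;4]);
      ([tuple 4;6;1;2;5;7;3;8], [tuple 1;5;8;6;2;7;4;3]);
      ([tuple 1;3;9;5;0;2;8;7], [tuple 0;8;1;9;2;5;3;7]);
      ([tuple 5;6;0;9;2;7;4;1], [tuple 0;2;4;6;1;7;9;5])].

Definition core_shape (e lo hi : nat) := (lo < 8) && (hi < 8 + e).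

Lemma core_design_ok e : (e == 0) || (e == 2) ->
  inside_design (core_design e) /\ design_in id (core_shape e) (core_design e).
Proof. by case/orP=> /eqP->; split; vm_compute. Qed.

Definition base12_design : seq (8.-tuple nat * 8.-tuple nat) :=
  [:: ([tuple 0;4;8;1;10;7;2;11], [tuple 0;10;2;1;11;4;7;8]);
      ([tuple 0;8;11;6;3;10;2;5], [tuple 0;11;2;8;10;6;5;3]);
      ([tuple 2;8;10;4;9;5;6;1], [tuple 1;5;10;9;2;6;8;4]);
      ([tuple 2;6;8;3;5;7;1;9], [tuple 1;3;6;9;7;2;5;8]);
      ([tuple 6;10;5;1;3;11;7;9], [tuple 1;6;11;5;9;3;10;7]);
      ([tuple 5;8;7;0;9;3;4;11], [tuple 0;5;7;3;8;11;9;4]);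
      ([tuple 3;7;4;1;11;9;10;0], [tuple 0;7;11;3;4;10;1;9])].

Definition base14_design : seq (8.-tuple nat * 8.-tuple nat) :=
  [:: ([tuple 0;4;13;8;12;7;11;3], [tuple 0;13;3;12;11;4;7;8]);
      ([tuple 0;11;8;2;5;7;9;12], [tuple 0;5;8;12;2;7;11;9]);
      ([tuple 0;7;4;12;10;6;3;5], [tuple 0;4;3;7;10;5;6;12]);
      ([tuple 0;8;10;1;11;4;3;13], [tuple 0;3;11;13;1;8;4;10]);
      ([tuple 4;8;5;6;1;12;3;9], [tuple 1;3;8;6;9;5;12;4]);
      ([tuple 3;8;1;9;2;6;13;10], [tuple 1;6;3;9;10;8;13;2]);
      ([tuple 6;8;7;10;2;11;5;12], [tuple 2;8;11;6;10;12;7;5]);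
      ([tuple 3;7;2;13;9;10;5;1], [tuple 1;9;2;10;3;5;13;7]);
      ([tuple 4;10;0;9;11;13;7;1], [tuple 0;7;9;4;13;10;1;11]);
      ([tuple 5;13;1;2;12;11;6;9], [tuple 1;12;9;13;6;2;11;5])].

Lemma extremal_design12 : extremal_design 12.
Proof. by apply: (@extremal_design_of_nat 11 base12_design); vm_compute. Qed.

Lemma extremal_design14 : extremal_design 14.
Proof. by apply: (@extremal_design_of_nat 13 base14_design); vm_compute. Qed.

Section Extension.
Variables (n e k : nat).
Hypothesis n_split : n = e + 4 * k.
Hypothesis e_0_or_2 : (e == 0) || (e == 2).

(* Old vertices are 0..n-1, new ones n..n+7.  The old vertices e..n-1 form
   k quadruples, the new ones two; each (new, old) pair of quadruples spans a
   copy of K_{4,4}. *)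
Definition k44_vertex (a j x : nat) := if x < 4 then n + 4 * a + x else e + 4 * j + (x - 4).
Definition core_vertex (x : nat) := if x < 8 then n + x else x - 8.

Definition k44_embed (a j x : nat) : 'I_(8 + n) := inord (k44_vertex a j x).
Definition core_embed (x : nat) : 'I_(8 + n) := inord (core_vertex x).

Definition k44_region (a j lo hi : nat) :=
  (e + 4 * j <= lo < e + 4 * j + 4) && (n + 4 * a <= hi < n + 4 * a + 4).
Definition core_region (lo hi : nat) := ((lo < e) || (n <= lo)) && (n <= hi).

Definition k44_slots := [seq (a, j) | a <- iota 0 2, j <- iota 0 k].
Definition k44_piece (s : nat * nat) := map (map_pair (k44_embed s.1 s.2)) k44_design.
Definition core_piece := map (map_pair core_embed) (core_design e).
Definition new_layer := flatten (map k44_piece k44_slots) ++ core_piece.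

Lemma mem_k44_slots s : (s \in k44_slots) = (s.1 < 2) && (s.2 < k).
Proof.
case: s => a j; apply/allpairsP/andP => [[[a' j'] [ha hj [-> ->]]]|[a2 jk]].
  by move: ha hj; rewrite !mem_iota.
by exists (a, j); rewrite !mem_iota.
Qed.

Lemma k44_piece_ok a j : a < 2 -> j < k ->
  inside_design (k44_piece (a, j)) /\ design_in val (k44_region a j) (k44_piece (a, j)).
Proof.
move=> a2 jk; have [K_design K_in] := k44_design_ok.
have vertex_lt x : x < 8 -> k44_vertex a j x < 8 + n.
  by rewrite /k44_vertex; case: ifP; lia.
split.
  apply: (inside_design_map (D := fun x => x < 8)) K_design; last first.
    by apply: design_in_bound K_in => lo hi /andP[_ ->].
  apply: inord_inj_in => // x y; rewrite /in_mem /= /k44_vertex => x8 y8.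
  by case: ifP; case: ifP; lia.
apply: design_in_map K_in => x y; rewrite /edge_in /k44_shape /= => xy_shape.
have [x8 y8] : x < 8 /\ y < 8 by lia.
rewrite /k44_embed (inordK (vertex_lt x x8)) (inordK (vertex_lt y y8)) /k44_region /k44_vertex.
by move: xy_shape; case: ifP; case: ifP; lia.
Qed.

Lemma core_piece_ok : inside_design core_piece /\ design_in val core_region core_piece.
Proof.
have [C_design C_in] := core_design_ok e_0_or_2.
have vertex_lt x : x < 8 + e -> core_vertex x < 8 + n.
  by rewrite /core_vertex; case: ifP; move: e_0_or_2; lia.
split.
  apply: (inside_design_map (D := fun x => x < 8 + e)) C_design; last first.
    by apply: design_in_bound C_in => lo hi /andP[_ ->].
  apply: inord_inj_in => // x y; rewrite /in_mem /= /core_vertex => xe ye.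
  by case: ifP; case: ifP; move: e_0_or_2; lia.
apply: design_in_map C_in => x y; rewrite /edge_in /core_shape /= => xy_shape.
have [xe ye] : x < 8 + e /\ y < 8 + e by lia.
rewrite /core_embed (inordK (vertex_lt x xe)) (inordK (vertex_lt y ye)) /core_region /core_vertex.
by move: xy_shape; case: ifP; case: ifP; move: e_0_or_2; lia.
Qed.

Lemma k44_pieces_ok :
  inside_design (flatten (map k44_piece k44_slots)) /\
  design_in val (fun lo hi => (e <= lo < n) && (n <= hi)) (flatten (map k44_piece k44_slots)).
Proof.
have slots_uniq : uniq k44_slots.
  by rewrite allpairs_uniq ?iota_uniq // => [[a j] [a' j']] _ _ /= [-> ->].
have pieces_ok s : s \in k44_slots ->
    inside_design (k44_piece s) /\ design_in val (k44_region s.1 s.2) (k44_piece s).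
  by case: s => a j; rewrite mem_k44_slots => /andP[]; apply: k44_piece_ok.
have regions_disj : {in k44_slots &, forall s s', s != s' ->
    regions_disjoint (k44_region s.1 s.2) (k44_region s'.1 s'.2)}.
  move=> [a j] [a' j']; rewrite !mem_k44_slots /= => /andP[_ jk] /andP[_ j'k] neq lo hi.
  rewrite /k44_region /= => R R'; move: neq.
  have -> : j = j' :> nat by lia.
  have -> : a = a' :> nat by lia.
  by rewrite eqxx.
have [pieces_design pieces_in] := inside_design_flatten_in slots_uniq pieces_ok regions_disj.
split=> //; apply: sub_design_in pieces_in => lo hi /hasP[[a j]].
by rewrite mem_k44_slots /k44_region /=; lia.
Qed.

Lemma new_layer_ok : inside_design new_layer /\ design_in val (fun _ hi => n <= hi) new_layer.
Proof.
have [pieces_design pieces_in] := k44_pieces_ok; have [C_design C_in] := core_piece_ok.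
split.
  apply: inside_design_cat_in pieces_design pieces_in C_design C_in.
  by move=> lo hi /=; rewrite /core_region; lia.
rewrite design_in_cat; apply/andP; split.
  by apply: sub_design_in pieces_in => lo hi /=; lia.
by apply: sub_design_in C_in => lo hi; rewrite /core_region /=; lia.
Qed.

Lemma size_new_layer : size new_layer = 4 * k + 3 + e.
Proof.
rewrite size_cat (size_allpairs (fun s => map_pair (k44_embed s.1 s.2))) size_allpairs !size_iota.
rewrite /core_piece size_map /core_design.
by case/orP: e_0_or_2 => /eqP-> /=; lia.
Qed.

End Extension.

Lemma design_in_widen n m (le_nm : n <= m) (L : seq (8.-tuple 'I_n * 8.-tuple 'I_n)) :
  design_in val (fun _ hi => hi < n) (map (map_pair (widen_ord le_nm)) L).
Proof.
apply: (design_in_map (key := val) (R := fun _ _ => true)) => [x y|].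
  by rewrite /edge_in /= gtn_max !ltn_ord.
by apply/allP => t _; apply/all_ord8P.
Qed.

Lemma extremal_design_add8 n : ~~ odd n -> extremal_design n -> extremal_design (8 + n).
Proof.
move=> n_even [L [L_design L_size]].
have n_split : n = n %% 4 + 4 * (n %/ 4) by rewrite {1}(divn_eq n 4) addnC mulnC.
have e_0_or_2 : (n %% 4 == 0) || (n %% 4 == 2) by move: n_even; rewrite -dvdn2; lia.
have [new_design new_in] := new_layer_ok n_split e_0_or_2.
pose old := map (map_pair (widen_ord (leq_addl 8 n))) L.
have old_design : inside_design old.
  apply: (inside_design_map (D := predT)) L_design.
    by move=> x y _ _ /(congr1 (@nat_of_ord _)) /= /ord_inj.
  by apply/allP => p _; rewrite /pair_all !all_predT.
exists (old ++ new_layer n (n %% 4) (n %/ 4)); split.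
  apply: inside_design_cat_in old_design (design_in_widen _ L) new_design new_in.
  by move=> lo hi /=; lia.
have square : (8 + n) * (8 + n - 1) = n * (n - 1) + 16 * n + 56 by case: (n) => [|m]; nia.
have size_old : size old = size L by rewrite size_map.
rewrite size_cat size_old (size_new_layer n_split e_0_or_2) square.
by move: L_size n_split; lia.
Qed.

Lemma extremal_design_mod8 m : extremal_design (12 + 8 * m) /\ extremal_design (14 + 8 * m).
Proof.
elim: m => [|m [IH12 IH14]]; first by split; [apply: extremal_design12 | apply: extremal_design14].
rewrite !mulnS !addnA !(addnC _ 8) -!addnA.
by split; apply: extremal_design_add8 => //; rewrite -dvdn2; lia.
Qed.

Theorem lemma3p10 (n : nat) :
  12 <= n -> n %% 16 \in [:: 4; 6; 12; 14] ->
  exists CC : {set {set {set 'I_n}}},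
    is_max_8cycle_packing CC /\ almost_2_perfect CC.
Proof.
move=> n_ge12; rewrite !inE => n_mod.
have n_even : ~~ odd n by rewrite -dvdn2; lia.
have [L [L_design L_size]] : extremal_design n.
  have [m [-> | ->]] : exists m, n = 12 + 8 * m \/ n = 14 + 8 * m.
    by exists ((n - 12) %/ 8); lia.
  - by case: (extremal_design_mod8 m).
  - by case: (extremal_design_mod8 m).
exists (design_packing L); split; last exact: design_packing_almost_2_perfect.
have L_packing := design_packing_is_packing L_design.
apply: max_packing_of_small_leave => //.
have := card_leave_packing L_packing; rewrite card_design_packing // bin2 -divn2 -subn1.
by move: L_size; lia.
Qed.
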